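(* Let $T$ be an argumentation theory, $G(T)$ its full grounding, and $G_{DL}(T)$ its grounding via the Datalog program $P_T$ of Transformation 1 (as in the context). Then for every semantics $\mathsf{sem}\in\{\text{complete},\text{grounded},\text{preferred},\text{stable}\}$, $$\mathsf{sem}(T)=\mathsf{sem}(G(T))=\mathsf{sem}(G_{DL}(T)),$$ where $\mathsf{sem}(G)$ denotes the set of $\mathsf{sem}$-extensions of the abstract argumentation framework $(\mathrm{Args}(G),\mathrm{Att}(G))$ and $\mathsf{sem}(T)$ is defined as $\mathsf{sem}(G(T))$.
   Context: Work over a function-free first-order signature (predicates and constants); atoms are $p(t_1,\dots,t_k)$ with each $t_i$ a constant or variable. An argumentation theory is $T=(K_n,K_p,R_s,R_d,C,\mathsf{n})$ where: $K_n$ (axioms) and $K_p$ (ordinary premises) are finite sets of ground atoms; $R_s$ (strict rules) is a finite set of rules $b_1(\vec X_1),\dots,b_m(\vec X_m)\to h(\vec Y)$ and $R_d$ (defeasible rules) a finite set of rules $b_1(\vec X_1),\dots,b_m(\vec X_m)\Rightarrow h(\vec Y)$, where every variable of the head occurs in the body; each $r\in R_d$ carries a name atom $\mathsf{n}(r)=\nu_r(\vec Z)$ whose variables occur in the body of $r$; $C$ is a finite set of contrariness rules $c: s(\vec X)\rightsquigarrow S(\vec X)$, where $s(\vec X)$ is an atom and $S(\vec X)$ a finite set of atoms whose variables occur in $\vec X$. The Herbrand universe $HU(T)$ is the set of constants occurring in $T$; a ground substitution maps variables to $HU(T)$, and for a rule or contrariness rule $x$ and ground substitution $\sigma$, $x\sigma$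 is its ground instance (with $\mathsf{n}(r\sigma)=\mathsf{n}(r)\sigma$). The full grounding $G(T)$ has the same $K_n,K_p$, and as rules and contrariness rules all ground instances $x\sigma$ of those of $T$. For a ground theory $G$ with premises $K_n\cup K_p$, rules $R$ and contrariness rules $C'$: arguments are defined inductively: each $k\in K_n\cup K_p$ is an argument with conclusion $\mathrm{conc}=k$, premises $\mathrm{Prem}=\{k\}$, no rules; if $A_1,\dots,A_m$ are arguments and $r\in R$ is a ground rule with body $\mathrm{conc}(A_1),\dots,\mathrm{conc}(A_m)$ and head $h$, then $A=\langle A_1,\dots,A_m\to h\rangle$ is an argument with $\mathrm{conc}(A)=h$, top rule $\mathrm{top}(A)=r$, $\mathrm{Prem}(A)=\bigcup_i\mathrm{Prem}(A_i)$, $\mathrm{Rules}(A)=\{r\}\cup\bigcup_i\mathrm{Rules}(A_i)$, and subarguments $\mathrm{Sub}(A)=\{A\}\cup\bigcup_i\mathrm{Sub}(A_i)$. The weak points of $A$ are $\mathrm{wp}(A)=(\mathrm{Prem}(A)\cap K_p)\cup\bigcup_{r\in\mathrm{Rules}(A)\cap R_d}\{\mathrm{head}(r),\mathsf{n}(r)\}$. Argument $A$ attacks $A'$ iff there is a ground contrariness rule $s\rightsquigarrow S$ in $C'$ with $s\in\mathrm{wp}(A')$ and $\mathrm{conc}(A)\in S$. $\mathrm{Args}(G)$ and $\mathrm{Att}(G)$ denote the set of arguments and the attack relation. Transformation 1: the Datalog program $P_T$ contains the fact $k.$ for every $k\in K_n\cup K_p$, and for every rule $r\in R_s\cup R_d$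 with body $b_1(\vec X_1),\dots,b_m(\vec X_m)$, head $h(\vec Y)$ and variable list $\vec X$ (all variables of $r$), with a fresh predicate $\mathrm{aux}_r$: the rules $\mathrm{aux}_r(\vec X)\leftarrow b_1(\vec X_1),\dots,b_m(\vec X_m)$ and $h(\vec Y)\leftarrow \mathrm{aux}_r(\vec X)$, and, if $r\in R_d$ with $\mathsf{n}(r)=\nu_r(\vec Z)$, additionally $\nu_r(\vec Z)\leftarrow\mathrm{aux}_r(\vec X)$. Let $M$ be the least Herbrand model of $P_T$. The grounding via Datalog $G_{DL}(T)$ has premises $K_n,K_p$, rules $\{r\sigma : r\in R_s\cup R_d,\ \mathrm{aux}_r(\vec X)\sigma\in M\}$ (strict/defeasible as $r$), and contrariness rules $\{c\sigma: c=(s(\vec X)\rightsquigarrow S(\vec X))\in C,\ s(\vec X)\sigma\in M\}$. Complete, grounded, preferred and stable extensions are those of Dung's abstract argumentation frameworks. *)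

From Stdlib Require Import List Arith.
Import ListNotations.

Inductive term : Type := TC (c : nat) | TV (v : nat).

Definition atom  : Type := (nat * list term)%type.   (* p(t1,...,tk) *)
Definition gatom : Type := (nat * list nat)%type.

Definition term_vars (t : term) : list nat :=
  match t with TC _ => [] | TV v => [v] end.
Definition term_consts (t : term) : list nat :=
  match t with TC c => [c] | TV _ => [] end.
Definition atom_vars (a : atom) : list nat := concat (map term_vars (snd a)).
Definition atom_consts (a : atom) : list nat := concat (map term_consts (snd a)).
Definition atoms_vars (l : list atom) : list nat := concat (map atom_vars l).
Definition atoms_consts (l : list atom) : list nat := concat (map atom_consts l).

(* strict rule  b1,...,bm -> h *)
Record srule := mkSRule { s_body : list atom; s_head : atom }.
(* defeasible rule  b1,...,bm => h  with name atom n(r) *)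
Record drule := mkDRule { d_body : list atom; d_head : atom; d_name : atom }.
(* contrariness rule  s(X) ~> S(X) *)
Record crule := mkCRule { c_s : atom; c_S : list atom }.

Record theory := mkTheory {
  Kn : list gatom;   (* axioms *)
  Kp : list gatom;   (* ordinary premises *)
  Rs : list srule;
  Rd : list drule;
  Cr : list crule }.

Definition svars (r : srule) : list nat :=
  nodup Nat.eq_dec (atoms_vars (s_body r) ++ atom_vars (s_head r)).
Definition dvars (r : drule) : list nat :=
  nodup Nat.eq_dec (atoms_vars (d_body r) ++ atom_vars (d_head r) ++ atom_vars (d_name r)).
Definition cvars (c : crule) : list nat :=
  nodup Nat.eq_dec (atom_vars (c_s c) ++ atoms_vars (c_S c)).

Definition wf_theory (T : theory) : Prop :=
  (forall r, In r (Rs T) ->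
     forall v, In v (atom_vars (s_head r)) -> In v (atoms_vars (s_body r))) /\
  (forall r, In r (Rd T) ->
     (forall v, In v (atom_vars (d_head r)) -> In v (atoms_vars (d_body r))) /\
     (forall v, In v (atom_vars (d_name r)) -> In v (atoms_vars (d_body r)))) /\
  (forall c, In c (Cr T) ->
     forall v, In v (atoms_vars (c_S c)) -> In v (atom_vars (c_s c))).

Definition HU (T : theory) : list nat :=
  concat (map snd (Kn T)) ++ concat (map snd (Kp T)) ++
  concat (map (fun r => atoms_consts (s_body r) ++ atom_consts (s_head r)) (Rs T)) ++
  concat (map (fun r => atoms_consts (d_body r) ++ atom_consts (d_head r)
                        ++ atom_consts (d_name r)) (Rd T)) ++
  concat (map (fun c => atom_consts (c_s c) ++ atoms_consts (c_S c)) (Cr T)).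

Definition ground_sub_on (U vs : list nat) (sigma : nat -> nat) : Prop :=
  forall v, In v vs -> In (sigma v) U.

Definition inst_term (sigma : nat -> nat) (t : term) : nat :=
  match t with TC c => c | TV v => sigma v end.
Definition inst (sigma : nat -> nat) (a : atom) : gatom :=
  (fst a, map (inst_term sigma) (snd a)).

(* ground rule; gname = None: strict, gname = Some n: defeasible with name n *)
Record grule := mkGRule { gbody : list gatom; ghead : gatom; gname : option gatom }.
Record gcrule := mkGCRule { gc_s : gatom; gc_S : list gatom }.

Record gtheory := mkGTheory {
  gKn : list gatom;
  gKp : list gatom;
  gR  : grule -> Prop;
  gC  : gcrule -> Prop }.

Definition s_inst (sigma : nat -> nat) (r : srule) : grule :=
  mkGRule (map (inst sigma) (s_body r)) (inst sigma (s_head r)) None.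
Definition d_inst (sigma : nat -> nat) (r : drule) : grule :=
  mkGRule (map (inst sigma) (d_body r)) (inst sigma (d_head r))
          (Some (inst sigma (d_name r))).
Definition c_inst (sigma : nat -> nat) (c : crule) : gcrule :=
  mkGCRule (inst sigma (c_s c)) (map (inst sigma) (c_S c)).

Definition full_grounding (T : theory) : gtheory :=
  mkGTheory (Kn T) (Kp T)
    (fun g =>
       (exists r sigma, In r (Rs T) /\ ground_sub_on (HU T) (svars r) sigma /\
                        g = s_inst sigma r) \/
       (exists r sigma, In r (Rd T) /\ ground_sub_on (HU T) (dvars r) sigma /\
                        g = d_inst sigma r))
    (fun g => exists c sigma, In c (Cr T) /\ ground_sub_on (HU T) (cvars c) sigma /\
                              g = c_inst sigma c).

(* Datalog predicates: original ones and fresh aux_r for the i-th strict /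
   i-th defeasible rule *)
Inductive dpred : Type := DP (p : nat) | AuxS (i : nat) | AuxD (i : nat).
Definition datom  : Type := (dpred * list term)%type.
Definition dgatom : Type := (dpred * list nat)%type.
Definition clause : Type := (datom * list datom)%type.   (* head <- body *)

Definition lift (a : atom) : datom := (DP (fst a), snd a).
Definition lift_ground (k : gatom) : datom := (DP (fst k), map TC (snd k)).
Definition dinst (sigma : nat -> nat) (d : datom) : dgatom :=
  (fst d, map (inst_term sigma) (snd d)).

Definition datom_vars (d : datom) : list nat := concat (map term_vars (snd d)).
Definition datom_consts (d : datom) : list nat := concat (map term_consts (snd d)).
Definition clause_vars (c : clause) : list nat :=
  datom_vars (fst c) ++ concat (map datom_vars (snd c)).
Definition clause_consts (c : clause) : list nat :=
  datom_consts (fst c) ++ concat (map datom_consts (snd c)).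

Definition program := list clause.
Definition HU_prog (P : program) : list nat := concat (map clause_consts P).

Inductive lhm (P : program) : dgatom -> Prop :=
| lhm_step : forall (c : clause) (sigma : nat -> nat),
    In c P -> ground_sub_on (HU_prog P) (clause_vars c) sigma ->
    (forall b, In b (snd c) -> lhm P (dinst sigma b)) ->
    lhm P (dinst sigma (fst c)).

Fixpoint mapi_from {A B : Type} (f : nat -> A -> B) (i : nat) (l : list A) : list B :=
  match l with [] => [] | x :: l' => f i x :: mapi_from f (S i) l' end.

Definition aux_s (i : nat) (r : srule) : datom := (AuxS i, map TV (svars r)).
Definition aux_d (i : nat) (r : drule) : datom := (AuxD i, map TV (dvars r)).

Definition s_clauses (i : nat) (r : srule) : list clause :=
  [ (aux_s i r, map lift (s_body r)); (lift (s_head r), [aux_s i r]) ].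
Definition d_clauses (i : nat) (r : drule) : list clause :=
  [ (aux_d i r, map lift (d_body r)); (lift (d_head r), [aux_d i r]);
    (lift (d_name r), [aux_d i r]) ].

Definition PT (T : theory) : program :=
  map (fun k => (lift_ground k, [])) (Kn T ++ Kp T) ++
  concat (mapi_from s_clauses 0 (Rs T)) ++
  concat (mapi_from d_clauses 0 (Rd T)).

Definition dl_grounding (T : theory) : gtheory :=
  mkGTheory (Kn T) (Kp T)
    (fun g =>
       (exists i r sigma, nth_error (Rs T) i = Some r /\
          ground_sub_on (HU T) (svars r) sigma /\
          lhm (PT T) (dinst sigma (aux_s i r)) /\ g = s_inst sigma r) \/
       (exists i r sigma, nth_error (Rd T) i = Some r /\
          ground_sub_on (HU T) (dvars r) sigma /\
          lhm (PT T) (dinst sigma (aux_d i r)) /\ g = d_inst sigma r))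
    (fun g => exists c sigma, In c (Cr T) /\ ground_sub_on (HU T) (cvars c) sigma /\
       lhm (PT T) (dinst sigma (lift (c_s c))) /\ g = c_inst sigma c).

Inductive arg : Type :=
| APrem : gatom -> arg
| ARule : grule -> list arg -> arg.

Definition conc (A : arg) : gatom :=
  match A with APrem k => k | ARule r _ => ghead r end.

Fixpoint prems (A : arg) : list gatom :=
  match A with APrem k => [k] | ARule _ As => concat (map prems As) end.
Fixpoint rules (A : arg) : list grule :=
  match A with APrem _ => [] | ARule r As => r :: concat (map rules As) end.

Inductive is_arg (G : gtheory) : arg -> Prop :=
| is_arg_prem : forall k, In k (gKn G) \/ In k (gKp G) -> is_arg G (APrem k)
| is_arg_rule : forall r As, gR G r -> (forall A, In A As -> is_arg G A) ->
    map conc As = gbody r -> is_arg G (ARule r As).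

Definition wp (G : gtheory) (A : arg) (x : gatom) : Prop :=
  (In x (prems A) /\ In x (gKp G)) \/
  (exists r n, In r (rules A) /\ gname r = Some n /\ (x = ghead r \/ x = n)).

Definition attacks (G : gtheory) (A B : arg) : Prop :=
  exists c, gC G c /\ wp G B (gc_s c) /\ In (conc A) (gc_S c).

Section Dung.
Variable X : Type.
Variable Args : X -> Prop.
Variable Att : X -> X -> Prop.

Definition subset (E F : X -> Prop) : Prop := forall a, E a -> F a.
Definition conflict_free (E : X -> Prop) : Prop :=
  forall a b, E a -> E b -> ~ Att a b.
Definition defends (E : X -> Prop) (a : X) : Prop :=
  forall b, Args b -> Att b a -> exists c, E c /\ Att c b.
Definition admissible (E : X -> Prop) : Prop :=
  subset E Args /\ conflict_free E /\ forall a, E a -> defends E a.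
Definition complete_ext (E : X -> Prop) : Prop :=
  admissible E /\ forall a, Args a -> defends E a -> E a.
Definition char_fixpoint (E : X -> Prop) : Prop :=
  forall a, E a <-> (Args a /\ defends E a).
Definition grounded_ext (E : X -> Prop) : Prop :=
  char_fixpoint E /\ forall F, char_fixpoint F -> subset E F.
Definition preferred_ext (E : X -> Prop) : Prop :=
  admissible E /\ forall F, admissible F -> subset E F -> subset F E.
Definition stable_ext (E : X -> Prop) : Prop :=
  subset E Args /\ conflict_free E /\
  forall a, Args a -> ~ E a -> exists b, E b /\ Att b a.
End Dung.

Inductive semantics : Type := Complete | Grounded | Preferred | Stable.

Definition sem_ext (s : semantics) (G : gtheory) (E : arg -> Prop) : Prop :=
  match s with
  | Complete  => complete_ext arg (is_arg G) (attacks G) E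
  | Grounded  => grounded_ext arg (is_arg G) (attacks G) E
  | Preferred => preferred_ext arg (is_arg G) (attacks G) E
  | Stable    => stable_ext arg (is_arg G) (attacks G) E
  end.

Definition sem_theory (s : semantics) (T : theory) (E : arg -> Prop) : Prop :=
  sem_ext s (full_grounding T) E.

From Stdlib Require Import List Arith Lia.
Import ListNotations.

(* Every conclusion of an argument of G(T), and every weak point of an
   argument of G_DL(T), is in the least model of P_T: the auxiliary atom of a
   rule instance is derived as soon as its body is.  Hence G_DL(T) keeps every
   rule instance that occurs in an argument of G(T) and every contrariness
   instance that can fire on a weak point, so both groundings induce the same
   arguments and the same attacks on them.  Dung's semantics only depend on
   these. *)

Definition equiv_framework {X : Type}
  (Args1 : X -> Prop) (Att1 : X -> X -> Prop)
  (Args2 : X -> Prop) (Att2 : X -> X -> Prop) : Prop :=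
  (forall a, Args1 a <-> Args2 a) /\
  (forall a b, Args1 b -> (Att1 a b <-> Att2 a b)).

Section Transfer.
Variable X : Type.
Implicit Types (Args : X -> Prop) (Att : X -> X -> Prop) (E F : X -> Prop).

Lemma equiv_framework_sym {Args1 Att1 Args2 Att2} :
  equiv_framework Args1 Att1 Args2 Att2 -> equiv_framework Args2 Att2 Args1 Att1.
Proof.
  intros [HArgs HAtt]; split.
  - intro a; symmetry; apply HArgs.
  - intros a b Hb; symmetry; apply HAtt, HArgs, Hb.
Qed.

Lemma defends_transfer {Args1 Att1 Args2 Att2}
  (H : equiv_framework Args1 Att1 Args2 Att2) E a :
  Args1 a -> defends X Args1 Att1 E a -> defends X Args2 Att2 E a.
Proof.
  destruct H as [HArgs HAtt]; intros Ha Hdef b Hb Hba.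
  assert (Hb1 : Args1 b) by (apply HArgs, Hb).
  destruct (Hdef b Hb1) as [c [Ec Hcb]]; [apply (HAtt b a Ha), Hba|].
  exists c; split; [exact Ec | apply (HAtt c b Hb1), Hcb].
Qed.

Lemma conflict_free_transfer {Args1 Att1 Args2 Att2}
  (H : equiv_framework Args1 Att1 Args2 Att2) E :
  subset X E Args1 -> conflict_free X Att1 E -> conflict_free X Att2 E.
Proof.
  intros HE Hcf a b Ea Eb Hab.
  apply (Hcf a b Ea Eb), (proj2 H a b (HE b Eb)), Hab.
Qed.

Lemma admissible_transfer {Args1 Att1 Args2 Att2}
  (H : equiv_framework Args1 Att1 Args2 Att2) E :
  admissible X Args1 Att1 E -> admissible X Args2 Att2 E.
Proof.
  intros [HE [Hcf Hdef]]; split; [|split].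
  - intros a Ea; apply (proj1 H), HE, Ea.
  - exact (conflict_free_transfer H E HE Hcf).
  - intros a Ea; exact (defends_transfer H E a (HE a Ea) (Hdef a Ea)).
Qed.

Lemma complete_transfer {Args1 Att1 Args2 Att2}
  (H : equiv_framework Args1 Att1 Args2 Att2) E :
  complete_ext X Args1 Att1 E -> complete_ext X Args2 Att2 E.
Proof.
  intros [Hadm Hcomp]; split; [exact (admissible_transfer H E Hadm)|].
  intros a Ha Hdef; apply Hcomp; [apply (proj1 H), Ha|].
  exact (defends_transfer (equiv_framework_sym H) E a Ha Hdef).
Qed.

Lemma char_fixpoint_transfer {Args1 Att1 Args2 Att2}
  (H : equiv_framework Args1 Att1 Args2 Att2) E :
  char_fixpoint X Args1 Att1 E -> char_fixpoint X Args2 Att2 E.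
Proof.
  intros Hfix a; split.
  - intro Ea; destruct (proj1 (Hfix a) Ea) as [Ha Hdef].
    split; [apply (proj1 H), Ha | exact (defends_transfer H E a Ha Hdef)].
  - intros [Ha Hdef]; apply Hfix; split; [apply (proj1 H), Ha|].
    exact (defends_transfer (equiv_framework_sym H) E a Ha Hdef).
Qed.

Lemma grounded_transfer {Args1 Att1 Args2 Att2}
  (H : equiv_framework Args1 Att1 Args2 Att2) E :
  grounded_ext X Args1 Att1 E -> grounded_ext X Args2 Att2 E.
Proof.
  intros [Hfix Hleast]; split; [exact (char_fixpoint_transfer H E Hfix)|].
  intros F HF; apply Hleast, (char_fixpoint_transfer (equiv_framework_sym H) F HF).
Qed.

Lemma preferred_transfer {Args1 Att1 Args2 Att2}
  (H : equiv_framework Args1 Att1 Args2 Att2) E :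
  preferred_ext X Args1 Att1 E -> preferred_ext X Args2 Att2 E.
Proof.
  intros [Hadm Hmax]; split; [exact (admissible_transfer H E Hadm)|].
  intros F HF; apply Hmax, (admissible_transfer (equiv_framework_sym H) F HF).
Qed.

Lemma stable_transfer {Args1 Att1 Args2 Att2}
  (H : equiv_framework Args1 Att1 Args2 Att2) E :
  stable_ext X Args1 Att1 E -> stable_ext X Args2 Att2 E.
Proof.
  intros [HE [Hcf Hatt]]; split; [|split].
  - intros a Ea; apply (proj1 H), HE, Ea.
  - exact (conflict_free_transfer H E HE Hcf).
  - intros a Ha NEa.
    assert (Ha1 : Args1 a) by (apply (proj1 H), Ha).
    destruct (Hatt a Ha1 NEa) as [b [Eb Hba]].
    exists b; split; [exact Eb | apply (proj2 H b a Ha1), Hba].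
Qed.

End Transfer.

Lemma sem_ext_transfer s G1 G2 E :
  equiv_framework (is_arg G1) (attacks G1) (is_arg G2) (attacks G2) ->
  sem_ext s G1 E -> sem_ext s G2 E.
Proof.
  intro H; destruct s; cbn.
  - exact (complete_transfer arg H E).
  - exact (grounded_transfer arg H E).
  - exact (preferred_transfer arg H E).
  - exact (stable_transfer arg H E).
Qed.

Lemma in_concat_map {A B} (f : A -> list B) l x y :
  In x l -> In y (f x) -> In y (concat (map f l)).
Proof. intros Hx Hy; apply in_concat; exists (f x); split; [apply in_map|]; assumption. Qed.

Lemma in_mapi_from {A B} (f : nat -> A -> B) l : forall i k x,
  nth_error l i = Some x -> In (f (k + i) x) (mapi_from f k l).
Proof.
  induction l as [|a l IH]; intros [|i] k x Hx; cbn in *; try discriminate.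
  - injection Hx as ->; left; rewrite Nat.add_0_r; reflexivity.
  - right; replace (k + S i) with (S k + i) by lia; apply IH, Hx.
Qed.

Lemma map_eq_In {A B C} (f : A -> C) (g : B -> C) l1 l2 (P : C -> Prop) :
  map f l1 = map g l2 -> (forall x, In x l1 -> P (f x)) -> forall y, In y l2 -> P (g y).
Proof.
  intros Hmap Hl1 y Hy.
  assert (Hgy : In (g y) (map f l1)) by (rewrite Hmap; apply in_map, Hy).
  apply in_map_iff in Hgy as [x [<- Hx]]; apply Hl1, Hx.
Qed.

Lemma rules_valid G A : is_arg G A -> forall r, In r (rules A) -> gR G r.
Proof.
  induction 1 as [k _ | r0 As Hr0 _ IH _]; intros r Hr; [contradiction|].
  destruct Hr as [<-|Hr]; [exact Hr0|].
  apply in_concat in Hr as [l [Hl Hr]]; apply in_map_iff in Hl as [B [<- HB]].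
  exact (IH B HB r Hr).
Qed.

Lemma datom_vars_aux q vs : datom_vars (q, map TV vs) = vs.
Proof.
  unfold datom_vars; cbn; induction vs as [|v vs IH]; cbn; [reflexivity|].
  rewrite IH; reflexivity.
Qed.

Lemma datom_vars_lift_ground k : datom_vars (lift_ground k) = [].
Proof.
  destruct k as [p l]; unfold datom_vars; cbn.
  induction l as [|c l IH]; cbn; [reflexivity | exact IH].
Qed.

Lemma inst_term_TC sigma l : map (inst_term sigma) (map TC l) = l.
Proof. induction l as [|c l IH]; cbn; [|rewrite IH]; reflexivity. Qed.

Lemma body_vars_lift l : concat (map datom_vars (map lift l)) = atoms_vars l.
Proof. rewrite map_map; reflexivity. Qed.

Lemma dinst_var sigma d v : In v (datom_vars d) -> In (sigma v) (snd (dinst sigma d)).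
Proof.
  unfold datom_vars; intro Hv; apply in_concat in Hv as [l [Hl Hv]].
  apply in_map_iff in Hl as [[c|w] [<- Ht]]; cbn in Hv; [contradiction|].
  destruct Hv as [<-|[]]; exact (in_map (inst_term sigma) _ (TV w) Ht).
Qed.

Lemma lhm_consts P g : lhm P g -> forall c, In c (snd g) -> In c (HU_prog P).
Proof.
  intro Hg; destruct Hg as [cl sigma Hcl Hsigma _]; intros c Hc.
  apply in_map_iff in Hc as [[c0|v] [<- Ht]]; cbn.
  - apply (in_concat_map _ _ cl); [exact Hcl|].
    apply in_or_app; left; apply (in_concat_map _ _ (TC c0)); [exact Ht | left; reflexivity].
  - apply Hsigma, in_or_app; left; apply (in_concat_map _ _ (TV v)); [exact Ht | left; reflexivity].
Qed.

Definition range_restricted (c : clause) : Prop :=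
  forall v, In v (datom_vars (fst c)) -> In v (concat (map datom_vars (snd c))).

(* Each variable of a range-restricted clause occurs in a derived body atom,
   so its value is a constant of the program: the substitution is admissible. *)
Lemma lhm_fire P c sigma :
  In c P -> range_restricted c ->
  (forall b, In b (snd c) -> lhm P (dinst sigma b)) -> lhm P (dinst sigma (fst c)).
Proof.
  intros Hc Hrr Hbody; apply lhm_step; [exact Hc | | exact Hbody].
  intros v Hv.
  assert (Hvb : In v (concat (map datom_vars (snd c)))).
  { apply in_app_or in Hv as [Hv|Hv]; [apply Hrr|]; exact Hv. }
  apply in_concat in Hvb as [l [Hl Hvb]]; apply in_map_iff in Hl as [b [<- Hb]].
  exact (lhm_consts P _ (Hbody b Hb) _ (dinst_var sigma b v Hvb)).
Qed.

Lemma range_restricted_aux h q vs :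
  (forall v, In v (datom_vars h) -> In v vs) -> range_restricted (h, [(q, map TV vs)]).
Proof.
  intros Hsub v Hv; cbn [fst snd map concat].
  rewrite datom_vars_aux, app_nil_r; exact (Hsub v Hv).
Qed.

Definition derived (T : theory) (k : gatom) : Prop := lhm (PT T) (DP (fst k), snd k).

Section DatalogGrounding.
Variable T : theory.
Hypothesis HT : wf_theory T.

Lemma derived_premise k : In k (Kn T) \/ In k (Kp T) -> derived T k.
Proof.
  intro Hk; unfold derived.
  replace (DP (fst k), snd k) with (dinst (fun v => v) (lift_ground k))
    by (unfold dinst; cbn; rewrite inst_term_TC; reflexivity).
  apply (lhm_fire _ (lift_ground k, [])).
  - apply in_or_app; left; apply (in_map (fun k => (lift_ground k, []))), in_app_iff, Hk.
  - intros v; cbn [fst]; rewrite datom_vars_lift_ground; intros [].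
  - intros b [].
Qed.

Lemma s_clause_in_PT i r c :
  nth_error (Rs T) i = Some r -> In c (s_clauses i r) -> In c (PT T).
Proof.
  intros Hr Hc; apply in_or_app; right; apply in_or_app; left.
  apply in_concat; exists (s_clauses i r); split; [|exact Hc].
  exact (in_mapi_from s_clauses _ i 0 r Hr).
Qed.

Lemma d_clause_in_PT i r c :
  nth_error (Rd T) i = Some r -> In c (d_clauses i r) -> In c (PT T).
Proof.
  intros Hr Hc; apply in_or_app; right; apply in_or_app; right.
  apply in_concat; exists (d_clauses i r); split; [|exact Hc].
  exact (in_mapi_from d_clauses _ i 0 r Hr).
Qed.

Lemma derived_aux_s i r sigma :
  nth_error (Rs T) i = Some r ->
  (forall b, In b (s_body r) -> derived T (inst sigma b)) ->
  lhm (PT T) (dinst sigma (aux_s i r)).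
Proof.
  intros Hr Hbody; apply (lhm_fire _ (aux_s i r, map lift (s_body r))).
  - apply (s_clause_in_PT i r _ Hr); left; reflexivity.
  - intro v; cbn [fst snd]; unfold aux_s.
    rewrite datom_vars_aux, body_vars_lift; unfold svars; rewrite nodup_In, in_app_iff.
    intros [Hv|Hv]; [exact Hv | exact (proj1 HT r (nth_error_In _ _ Hr) v Hv)].
  - intros b Hb; apply in_map_iff in Hb as [a [<- Ha]]; exact (Hbody a Ha).
Qed.

Lemma derived_s_head i r sigma :
  nth_error (Rs T) i = Some r ->
  lhm (PT T) (dinst sigma (aux_s i r)) -> derived T (inst sigma (s_head r)).
Proof.
  intros Hr Haux; apply (lhm_fire _ (lift (s_head r), [aux_s i r])).
  - apply (s_clause_in_PT i r _ Hr); right; left; reflexivity.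
  - apply range_restricted_aux; intros v Hv.
    unfold svars; rewrite nodup_In, in_app_iff; right; exact Hv.
  - intros b [<-|[]]; exact Haux.
Qed.

Lemma derived_aux_d i r sigma :
  nth_error (Rd T) i = Some r ->
  (forall b, In b (d_body r) -> derived T (inst sigma b)) ->
  lhm (PT T) (dinst sigma (aux_d i r)).
Proof.
  intros Hr Hbody; apply (lhm_fire _ (aux_d i r, map lift (d_body r))).
  - apply (d_clause_in_PT i r _ Hr); left; reflexivity.
  - destruct (proj1 (proj2 HT) r (nth_error_In _ _ Hr)) as [Hhead Hname].
    intro v; cbn [fst snd]; unfold aux_d.
    rewrite datom_vars_aux, body_vars_lift; unfold dvars; rewrite nodup_In, !in_app_iff.
    intros [Hv|[Hv|Hv]]; [exact Hv | apply Hhead, Hv | apply Hname, Hv].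
  - intros b Hb; apply in_map_iff in Hb as [a [<- Ha]]; exact (Hbody a Ha).
Qed.

Lemma derived_d_head_name i r sigma :
  nth_error (Rd T) i = Some r -> lhm (PT T) (dinst sigma (aux_d i r)) ->
  derived T (inst sigma (d_head r)) /\ derived T (inst sigma (d_name r)).
Proof.
  intros Hr Haux; split.
  - apply (lhm_fire _ (lift (d_head r), [aux_d i r])).
    + apply (d_clause_in_PT i r _ Hr); right; left; reflexivity.
    + apply range_restricted_aux; intros v Hv.
      unfold dvars; rewrite nodup_In, !in_app_iff; right; left; exact Hv.
    + intros b [<-|[]]; exact Haux.
  - apply (lhm_fire _ (lift (d_name r), [aux_d i r])).
    + apply (d_clause_in_PT i r _ Hr); right; right; left; reflexivity.
    + apply range_restricted_aux; intros v Hv.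
      unfold dvars; rewrite nodup_In, !in_app_iff; right; right; exact Hv.
    + intros b [<-|[]]; exact Haux.
Qed.

Lemma is_arg_full_dl A :
  is_arg (full_grounding T) A -> is_arg (dl_grounding T) A /\ derived T (conc A).
Proof.
  induction 1 as [k Hk | r As Hr _ IH Hbody].
  - split; [constructor; exact Hk | exact (derived_premise k Hk)].
  - assert (HAs : forall A, In A As -> is_arg (dl_grounding T) A) by (intros; apply IH; assumption).
    assert (Hconc : forall A, In A As -> derived T (conc A)) by (intros; apply IH; assumption).
    destruct Hr as [[r' [sigma [Hr' [Hsigma ->]]]] | [r' [sigma [Hr' [Hsigma ->]]]]];
      destruct (In_nth_error _ _ Hr') as [i Hi].
    + pose proof (derived_aux_s i r' sigma Hi (map_eq_In _ _ _ _ _ Hbody Hconc)) as Haux.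
      split; [|exact (derived_s_head i r' sigma Hi Haux)].
      constructor; [left; exists i, r', sigma; repeat split; assumption | exact HAs | exact Hbody].
    + pose proof (derived_aux_d i r' sigma Hi (map_eq_In _ _ _ _ _ Hbody Hconc)) as Haux.
      split; [|exact (proj1 (derived_d_head_name i r' sigma Hi Haux))].
      constructor; [right; exists i, r', sigma; repeat split; assumption | exact HAs | exact Hbody].
Qed.

Lemma is_arg_dl_full A : is_arg (dl_grounding T) A -> is_arg (full_grounding T) A.
Proof.
  induction 1 as [k Hk | r As Hr _ IH Hbody]; constructor; try assumption.
  destruct Hr as [[i [r' [sigma [Hi [Hsigma [_ ->]]]]]] | [i [r' [sigma [Hi [Hsigma [_ ->]]]]]]].
  - left; exists r', sigma; split; [exact (nth_error_In _ _ Hi) | split; [exact Hsigma | reflexivity]].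
  - right; exists r', sigma; split; [exact (nth_error_In _ _ Hi) | split; [exact Hsigma | reflexivity]].
Qed.

Lemma dl_rule_derived r n :
  gR (dl_grounding T) r -> gname r = Some n -> derived T (ghead r) /\ derived T n.
Proof.
  intros [[i [r' [sigma [_ [_ [_ ->]]]]]] | [i [r' [sigma [Hi [_ [Haux ->]]]]]]] Hn;
    cbn in Hn; [discriminate|].
  injection Hn as <-; exact (derived_d_head_name i r' sigma Hi Haux).
Qed.

Lemma wp_derived B x :
  is_arg (dl_grounding T) B -> wp (dl_grounding T) B x -> derived T x.
Proof.
  intros HB [[_ Hx] | [r [n [Hr [Hn [-> | ->]]]]]].
  - exact (derived_premise x (or_intror Hx)).
  - exact (proj1 (dl_rule_derived r n (rules_valid _ _ HB r Hr) Hn)).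
  - exact (proj2 (dl_rule_derived r n (rules_valid _ _ HB r Hr) Hn)).
Qed.

Lemma attacks_full_dl A B :
  is_arg (full_grounding T) B ->
  (attacks (full_grounding T) A B <-> attacks (dl_grounding T) A B).
Proof.
  intro HB; split; intros [c [Hc [Hwp HA]]]; exists c; (split; [|split; assumption]).
  - destruct Hc as [c' [sigma [Hc' [Hsigma ->]]]].
    exists c', sigma; repeat split; try assumption.
    exact (wp_derived B _ (proj1 (is_arg_full_dl B HB)) Hwp).
  - destruct Hc as [c' [sigma [Hc' [Hsigma [_ ->]]]]].
    exists c', sigma; repeat split; assumption.
Qed.

Lemma equiv_framework_full_dl :
  equiv_framework (is_arg (full_grounding T)) (attacks (full_grounding T))
                  (is_arg (dl_grounding T)) (attacks (dl_grounding T)).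
Proof.
  split; [|exact attacks_full_dl].
  intro A; split; [exact (fun HA => proj1 (is_arg_full_dl A HA)) | exact (is_arg_dl_full A)].
Qed.

End DatalogGrounding.

Theorem theorem1 (T : theory) (HT : wf_theory T) (s : semantics) :
  (forall E : arg -> Prop, sem_theory s T E <-> sem_ext s (full_grounding T) E) /\
  (forall E : arg -> Prop, sem_ext s (full_grounding T) E <-> sem_ext s (dl_grounding T) E).
Proof.
  pose proof (equiv_framework_full_dl T HT) as Heq.
  split; intro E; [reflexivity|].
  split; apply sem_ext_transfer; [exact Heq | exact (equiv_framework_sym _ Heq)].
Qed.
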